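(* Let $R$ be an $F$-finite $F$-pure ring of prime characteristic $p$, let $\{\mathfrak q_i\}_i$ be a family of ideals of $R$, $J=\bigcap_i\mathfrak q_i$, and $\mathfrak a$ an ideal with $\mathfrak a\subseteq\sqrt J$. Then $\operatorname{ct}_J(\mathfrak a)=\sup_i\operatorname{ct}_{\mathfrak q_i}(\mathfrak a)$.
   Context: $J_e=\{f\in R\mid \varphi(f^{1/p^e})\in J \text{ for all }\varphi\in\operatorname{Hom}_R(R^{1/p^e},R)\}$; for $\mathfrak a\subseteq\sqrt J$, $b^J_{\mathfrak a}(p^e)=\max\{t\in\mathbb N\mid\mathfrak a^t\not\subseteq J_e\}$ and the Cartier threshold is $\operatorname{ct}_J(\mathfrak a)=\lim_{e\to\infty}b^J_{\mathfrak a}(p^e)/p^e$ (this limit exists). *)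

From HB Require Import structures.
From mathcomp Require Import all_boot all_order all_algebra.
From Stdlib Require Import Reals ClassicalEpsilon.
Set Implicit Arguments. Unset Strict Implicit. Unset Printing Implicit Defensive.
Import GRing.Theory.

Section Defs.
Variable Rg : comNzRingType.
Local Open Scope ring_scope.

Definition ideal (I : Rg -> Prop) : Prop :=
  [/\ I 0, (forall x y, I x -> I y -> I (x + y)) & (forall r x, I x -> I (r * x))].

Definition incl (I K : Rg -> Prop) : Prop := forall x, I x -> K x.

Definition bigcap (T : Type) (q : T -> Rg -> Prop) : Rg -> Prop :=
  fun x => forall i, q i x.

Definition radical (I : Rg -> Prop) : Rg -> Prop :=
  fun x => exists n : nat, I (x ^+ n).

(* a^t : the ideal generated by all products of t elements of a. *)
Definition ideal_pow (a : Rg -> Prop) (t : nat) : Rg -> Prop :=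
  fun x => forall K, ideal K ->
    (forall s : seq Rg, size s = t -> (forall y, y \in s -> a y) -> K (\prod_(y <- s) y)) ->
    K x.

Definition gen_by (s : seq Rg) : Rg -> Prop :=
  fun x => exists c : seq Rg, size c = size s /\ x = \sum_(i < size s) c`_i * s`_i.

Definition noetherian : Prop :=
  forall I, ideal I -> exists s : seq Rg, forall x, I x <-> gen_by s x.

(* F-finite: F_* R is a finitely generated R-module, i.e. there are s_1..s_n
   with every x = sum r_i^p s_i. *)
Definition Ffinite (p : nat) : Prop :=
  exists s : seq Rg, forall x : Rg, exists c : seq Rg,
    size c = size s /\ x = \sum_(i < size s) (c`_i ^+ p) * s`_i.

(* F-pure: the Frobenius R -> F_* R is a pure monomorphism of R-modules
   (purity in the sense of Cohn: every finite system of R-linear equations with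
   constants in the image of R that is solvable in F_* R is solvable in the image).
   In F_* R, the action is r . y = r^p y and the image of b is b^p. *)
Definition Fpure (p : nat) : Prop :=
  injective (fun x : Rg => x ^+ p) /\
  forall (m n : nat) (A : 'M[Rg]_(m, n)) (b : 'cV[Rg]_m),
    (exists y : 'cV[Rg]_n,
        map_mx (fun r => r ^+ p) A *m y = map_mx (fun r => r ^+ p) b) ->
    (exists x : 'cV[Rg]_n,
        map_mx (fun r => r ^+ p) A *m map_mx (fun r => r ^+ p) x
        = map_mx (fun r => r ^+ p) b).

(* Elements of Hom_R(R^{1/p^e}, R), via the identification R^{1/p^e} = F^e_* R:
   additive maps phi with phi (r^{p^e} x) = r phi x.  phi(f^{1/p^e}) is phi f. *)
Definition pe_linear (p e : nat) (phi : Rg -> Rg) : Prop :=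
  (forall x y, phi (x + y) = phi x + phi y) /\
  (forall r x, phi (r ^+ (expn p e) * x) = r * phi x).

Definition Je (p e : nat) (J : Rg -> Prop) : Rg -> Prop :=
  fun f => forall phi, pe_linear p e phi -> J (phi f).

Definition is_bmax (p e : nat) (J a : Rg -> Prop) (t : nat) : Prop :=
  ~ incl (ideal_pow a t) (Je p e J) /\
  (forall t', ~ incl (ideal_pow a t') (Je p e J) -> leq t' t).

(* b^J_a(p^e); convention: 0 if the maximum does not exist. *)
Definition bnum (p e : nat) (J a : Rg -> Prop) : nat :=
  epsilon (inhabits 0%N)
    (fun t => is_bmax p e J a t \/ (~ (exists m, is_bmax p e J a m) /\ t = 0%N)).

End Defs.

Definition ct (Rg : comNzRingType) (p : nat) (J a : Rg -> Prop) : R :=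
  epsilon (inhabits 0%R)
    (fun L => Un_cv (fun e => (INR (bnum p e J a) / INR (expn p e))%R) L).

(* Since (bigcap q)_e is the intersection of the (q i)_e, the power a^t
   escapes J_e iff it escapes some (q i)_e; hence b^J_a(p^e) is attained as
   some b^(q i)_a(p^e).  All these numbers are at most C p^e: a is generated
   by finitely many elements whose N-th powers lie in J, and by pigeonhole
   a^n lies in J^[p^e], hence in J_e, as soon as n > C p^e.  A Frobenius
   splitting, which exists because R is Noetherian, F-finite and F-pure, gives
   p b(p^e) <= b(p^(e+1)), so b(p^e)/p^e increases to its limit ct.  Thus
   every b^J_a(p^e)/p^e is bounded by some ct_(q i)(a), which in turn is at
   most ct_J(a). *)

From HB Require Import structures.
From mathcomp Require Import all_boot all_order all_algebra.
From Stdlib Require Import Reals Classical ClassicalEpsilon.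
From mathcomp Require Import zify ring.
Import GRing.Theory.

Set Implicit Arguments.
Unset Strict Implicit.
Unset Printing Implicit Defensive.

Section IdealPow.
Variable Rg : comNzRingType.
Local Open Scope ring_scope.
Implicit Types (a b : Rg -> Prop) (s : seq Rg).

Lemma ideal_pow_ideal a t : ideal (ideal_pow a t).
Proof.
split.
- by move=> K [K0 _ _] _.
- by move=> x y Hx Hy K /[dup] HK [_ KD _] Hg; apply: KD; [exact: Hx|exact: Hy].
- by move=> r x Hx K /[dup] HK [_ _ KM] Hg; apply: KM; exact: Hx.
Qed.

Lemma ideal_pow_ind a t (K : Rg -> Prop) : ideal K ->
  (forall s, size s = t -> (forall y, y \in s -> a y) -> K (\prod_(y <- s) y)) ->
  forall x, ideal_pow a t x -> K x.
Proof. by move=> HK Hg x Hx; apply: Hx. Qed.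

Lemma ideal_pow_prod a s : (forall y, y \in s -> a y) ->
  ideal_pow a (size s) (\prod_(y <- s) y).
Proof. by move=> Hs K _ Hg; apply: Hg. Qed.

Lemma ideal_pow0 a x : ideal_pow a 0 x.
Proof.
have [_ _ IM] := ideal_pow_ideal a 0.
have -> : x = x * \prod_(y <- [::]) y by rewrite big_nil mulr1.
by apply: IM; apply: (@ideal_pow_prod a [::]).
Qed.

Lemma ideal_pow1 a x : a x -> ideal_pow a 1 x.
Proof.
move=> Hx; have := @ideal_pow_prod a [:: x]; rewrite big_seq1; apply.
by move=> y; rewrite inE => /eqP ->.
Qed.

Lemma ideal_powD a m n x y : ideal_pow a m x -> ideal_pow a n y ->
  ideal_pow a (m + n) (x * y).
Proof.
have [I0 ID IM] := ideal_pow_ideal a (m + n).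
move=> Hx; move: y.
apply: (ideal_pow_ind (K := fun x => forall y, ideal_pow a n y -> _ (x * y)) _ _ Hx).
  split=> [z _|u v Hu Hv z Hz|r u Hu z Hz]; first by rewrite mul0r.
    by rewrite mulrDl; apply: ID; [apply: Hu|apply: Hv].
  by rewrite -mulrA; apply: IM; apply: Hu.
move=> s1 Hs1 Hin1 z.
apply: (ideal_pow_ind (K := fun z => ideal_pow a (m + n) (_ * z))).
  split=> [|u v Hu Hv|r u Hu]; [by rewrite mulr0 | by rewrite mulrDr; apply: ID |].
  by rewrite mulrCA; apply: IM.
move=> s2 Hs2 Hin2; rewrite -big_cat -Hs1 -Hs2 -size_cat.
by apply: ideal_pow_prod => w; rewrite mem_cat => /orP [] ?; [exact: Hin1|exact: Hin2].
Qed.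

Lemma ideal_powX a t n x : ideal_pow a t x -> ideal_pow a (t * n) (x ^+ n).
Proof.
move=> Hx; elim: n => [|n IH]; first by rewrite muln0; apply: ideal_pow0.
by rewrite exprS mulnS; apply: ideal_powD.
Qed.

Lemma ideal_pow_sub a b t : incl a b -> incl (ideal_pow a t) (ideal_pow b t).
Proof.
move=> Hab x; apply: (ideal_pow_ind (ideal_pow_ideal b t)) => s Hs Hin.
by rewrite -Hs; apply: ideal_pow_prod => y /Hin /Hab.
Qed.

End IdealPow.

Section Cartier.
Variables (Rg : comNzRingType) (p : nat).
Local Open Scope ring_scope.
Implicit Types (J K : Rg -> Prop) (phi psi sigma : Rg -> Rg).

Lemma pe_linear0 e phi : pe_linear p e phi -> phi 0 = 0.
Proof. by move=> [HD _]; apply/(addrI (phi 0)); rewrite -HD !addr0. Qed.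

Lemma pe_linearMl e phi r : pe_linear p e phi -> pe_linear p e (fun y => phi (r * y)).
Proof. by move=> [HD HM]; split=> [x y|s x]; rewrite ?mulrDr ?HD // mulrCA HM. Qed.

Lemma pe_linear_comp e e' phi psi :
  pe_linear p e phi -> pe_linear p e' psi -> pe_linear p (e + e') (phi \o psi).
Proof.
move=> [HD HM] [HD' HM']; split=> [x y|r x] /=; first by rewrite HD' HD.
by rewrite expnD exprM HM' HM.
Qed.

Lemma Je_ideal e J : ideal J -> ideal (Je p e J).
Proof.
move=> [J0 JD _]; split=> [phi /pe_linear0 -> // | x y Hx Hy phi Hphi | r x Hx phi Hphi].
  by case: (Hphi) => HD _; rewrite HD; apply: JD; [apply: Hx|apply: Hy].
exact: (Hx _ (pe_linearMl r Hphi)).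
Qed.

Lemma Je_bigcap e (I : Type) (q : I -> Rg -> Prop) x :
  Je p e (bigcap q) x <-> forall i, Je p e (q i) x.
Proof. by split=> [Hx i phi /Hx|Hx phi Hphi i]; [apply|apply: Hx]. Qed.

Lemma Je_frobenius_pow e J x y : ideal J -> J x -> Je p e J (x ^+ expn p e * y).
Proof. by move=> [_ _ JM] Jx phi [_ HM]; rewrite HM mulrC; apply: JM. Qed.

Definition Fsplitting sigma := pe_linear p 1 sigma /\ sigma 1 = 1.

Lemma Fsplitting_frobenius sigma x : Fsplitting sigma -> sigma (x ^+ p) = x.
Proof. by move=> [[_ HM] H1]; rewrite -[x ^+ p]mulr1 -{1}(expn1 p) HM H1 mulr1. Qed.

Lemma Je_frobenius_root e J sigma x :
  Fsplitting sigma -> Je p e.+1 J (x ^+ p) -> Je p e J x.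
Proof.
move=> Hsigma Hx phi Hphi.
have Hcomp := pe_linear_comp Hphi (proj1 Hsigma); rewrite addn1 in Hcomp.
by have := Hx _ Hcomp; rewrite /= Fsplitting_frobenius.
Qed.

End Cartier.

Section LinearBound.
Variable Rg : comNzRingType.
Local Open Scope ring_scope.
Implicit Types (J a : Rg -> Prop) (g : Rg) (gs : seq Rg).

Lemma gen_by_nil x : gen_by [::] x -> x = 0 :> Rg.
Proof. by move=> [c [_ ->]]; rewrite big_ord0. Qed.

Lemma gen_by_cons g gs x : gen_by (g :: gs) x ->
  exists c y, x = c * g + y /\ gen_by gs y.
Proof.
move=> [c [Hc ->]]; rewrite big_ord_recl /=.
exists c`_0, (\sum_(i < size gs) c`_(bump 0 i) * gs`_i); split=> //.
exists (behead c); split; first by rewrite size_behead Hc.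
by apply: eq_bigr => i _; rewrite nth_behead.
Qed.

Lemma gen_by_mem gs g : g \in gs -> gen_by gs g.
Proof.
move=> Hg; have Hi : (index g gs < size gs)%nat by rewrite index_mem.
exists [seq (j == index g gs)%:R | j <- iota 0 (size gs)]; split.
  by rewrite size_map size_iota.
rewrite (bigD1 (Ordinal Hi)) //= big1 => [|j /negbTE Hj].
  by rewrite (nth_map 0%nat) ?size_iota // nth_iota // eqxx mul1r nth_index // addr0.
rewrite (nth_map 0%nat) ?size_iota // nth_iota // add0n.
have -> : (nat_of_ord j == index g gs) = false by exact: Hj.
by rewrite mul0r.
Qed.

(* Pigeonhole on the monomials in [g] and the elements of [gs]. *)
Lemma prod_gen_by_cons g gs (l : seq Rg) u v :
  (forall y, y \in l -> gen_by (g :: gs) y) -> (u + v <= (size l).+1)%nat ->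
  exists r z, \prod_(y <- l) y = g ^+ u * r + z /\ ideal_pow (gen_by gs) v z.
Proof.
have u0 l' v' : exists r z,
    \prod_(y <- l') y = g ^+ 0 * r + z /\ ideal_pow (gen_by gs) v' z.
  exists (\prod_(y <- l') y), 0; rewrite expr0 mul1r addr0.
  by split=> //; case: (ideal_pow_ideal (gen_by gs) v').
have v0 l' u' : exists r z,
    \prod_(y <- l') y = g ^+ u' * r + z /\ ideal_pow (gen_by gs) 0 z.
  by exists 0, (\prod_(y <- l') y); rewrite mulr0 add0r; split=> //; apply: ideal_pow0.
elim: l u v => [|x l IH] [|u] [|v] Hl Huv; try by [apply: u0 | apply: v0].
  by rewrite /= in Huv; lia.
have Hl' y : y \in l -> gen_by (g :: gs) y by move=> Hy; apply: Hl; rewrite inE Hy orbT.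
have [r1 [z1 [E1 H1]]] := IH u v.+1 Hl' ltac:(rewrite /= in Huv; lia).
have [r2 [z2 [E2 H2]]] := IH u.+1 v Hl' ltac:(rewrite /= in Huv; lia).
have [c [y [-> Hy]]] := gen_by_cons (Hl x (mem_head _ _)).
have [_ ID IM] := ideal_pow_ideal (gen_by gs) v.+1.
exists (c * r1 + y * r2), (c * g * z1 + y * z2); split.
  by rewrite big_cons mulrDl {1}E1 E2 exprS; ring.
apply: ID; first exact: IM.
by rewrite -add1n; apply: ideal_powD (ideal_pow1 Hy) H2.
Qed.

Lemma ideal_pow_gen_by_sub_Je p e N J gs : ideal J ->
  (forall g, g \in gs -> J (g ^+ N)) ->
  forall n, (size gs * (N * expn p e) < n)%nat -> incl (ideal_pow (gen_by gs) n) (Je p e J).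
Proof.
move=> HJ; have HJe := Je_ideal p e HJ; have [Je0 JeD _] := HJe.
elim: gs => [|g gs IH] Hgs n Hn x; apply: (ideal_pow_ind HJe) => l Hl Hin.
  case: l Hl Hin => [|y l] Hl Hin; first by rewrite -Hl in Hn.
  by rewrite big_cons (gen_by_nil (Hin y (mem_head _ _))) mul0r.
pose q := (N * expn p e)%nat.
have [r [z [-> Hz]]] := prod_gen_by_cons (u := q) (v := n.+1 - q) Hin
  ltac:(rewrite Hl /= in Hn *; lia).
apply: JeD; first by rewrite /q exprM; apply: Je_frobenius_pow => //; apply/Hgs/mem_head.
apply: IH Hz => [h Hh|]; first by apply: Hgs; rewrite inE Hh orbT.
by rewrite /= in Hn; lia.
Qed.

Lemma radical_common_exponent J gs : ideal J -> (forall g, g \in gs -> radical J g) ->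
  exists N, forall g, g \in gs -> J (g ^+ N).
Proof.
move=> [_ _ JM]; elim: gs => [|g gs IH] Hrad; first by exists 0%nat.
have [N HN] := IH (fun h Hh => Hrad h ltac:(by rewrite inE Hh orbT)).
have [n Hn] := Hrad g (mem_head _ _).
exists (n + N)%nat => h; rewrite inE => /orP [/eqP ->|Hh].
  by rewrite exprD mulrC; apply: JM.
by rewrite exprD; apply/JM/HN.
Qed.

Lemma ideal_pow_sub_Je_linear p J a : noetherian Rg -> ideal J -> ideal a ->
  incl a (radical J) ->
  exists C, forall e n, (C * expn p e < n)%nat -> incl (ideal_pow a n) (Je p e J).
Proof.
move=> HN HJ Ha Hrad; have [gs Hgs] := HN a Ha.
have [N HNg] : exists N, forall g, g \in gs -> J (g ^+ N).
  by apply: radical_common_exponent => // g /gen_by_mem /Hgs /Hrad.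
exists (size gs * N)%nat => e n Hn x /(ideal_pow_sub (fun y => proj1 (Hgs y))).
by apply: (ideal_pow_gen_by_sub_Je HJ HNg); rewrite mulnA.
Qed.

End LinearBound.

Section Submodules.
Variable Rg : comNzRingType.
Local Open Scope ring_scope.

Definition submod n (M : 'rV[Rg]_n -> Prop) :=
  [/\ M 0, (forall u v, M u -> M v -> M (u + v)) & (forall r u, M u -> M (r *: u))].

Lemma submod_mulmx n m (M : 'rV[Rg]_n -> Prop) (G : 'M_(m, n)) (w : 'rV_m) :
  submod M -> (forall i, M (row i G)) -> M (w *m G).
Proof.
move=> [M0 MD MZ] HG; rewrite mulmx_sum_row.
by apply: (big_ind M) => // i _; apply: MZ.
Qed.

Lemma gen_by_row (gs : seq Rg) x : gen_by gs x ->
  exists c : 'rV[Rg]_(size gs), x = \sum_j c 0 j * gs`_j.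
Proof. by move=> [c [_ ->]]; exists (\row_j c`_j); apply: eq_bigr => j _; rewrite mxE. Qed.

Section LeadingCoordinate.
Variables (n : nat) (M : 'rV[Rg]_(1 + n) -> Prop).
Hypothesis HM : submod M.

Definition lead_ideal (x : Rg) := exists v, M v /\ x = v 0 (lshift n ord0).

Lemma lead_ideal_ideal : ideal lead_ideal.
Proof.
have [M0 MD MZ] := HM; split.
- by exists 0; rewrite mxE.
- by move=> _ _ [u [Hu ->]] [v [Hv ->]]; exists (u + v); rewrite mxE; split=> //; apply: MD.
- by move=> r _ [u [Hu ->]]; exists (r *: u); rewrite mxE; split=> //; apply: MZ.
Qed.

Definition tail_submod (w : 'rV[Rg]_n) := M (row_mx 0 w).

Lemma tail_submod_submod : submod tail_submod.
Proof.
have [M0 MD MZ] := HM; split; rewrite /tail_submod.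
- by rewrite row_mx0.
- by move=> u v Hu Hv; rewrite -[0]addr0 -add_row_mx; apply: MD.
- by move=> r u Hu; rewrite -(scaler0 _ r) -scale_row_mx; apply: MZ.
Qed.

End LeadingCoordinate.

Lemma noetherian_submod_fg n (M : 'rV[Rg]_n -> Prop) : noetherian Rg -> submod M ->
  exists m (G : 'M[Rg]_(m, n)), (forall i, M (row i G)) /\
    forall v, M v -> exists w : 'rV_m, v = w *m G.
Proof.
move=> HN; elim: n M => [|n IH] M HM.
  exists 0%nat, 0; split=> [[]//|v _]; exists 0; rewrite mul0mx; exact: thinmx0.
move: M HM; change n.+1 with (1 + n)%nat => M HM; have [M0 MD MZ] := HM.
have [gs Hgs] := HN _ (lead_ideal_ideal HM).
have /fin_all_exists [f Hf] : forall j : 'I_(size gs),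
    exists v, M v /\ gs`_j = v 0 (lshift n ord0).
  by move=> j; apply/Hgs/gen_by_mem/mem_nth.
pose V := \matrix_(j < size gs) f j.
have HV j : M (row j V) by rewrite rowK; case: (Hf j).
have [m' [W [HW1 HW2]]] := IH _ (tail_submod_submod HM).
exists (size gs + m')%nat, (col_mx V (row_mx 0 W)); split.
  move=> i; case: (split_ordP i) => j ->; first by rewrite rowKu.
  by rewrite rowKd row_row_mx row0; apply: HW1.
move=> v Hv; have [c Hc] := gen_by_row (proj1 (Hgs _) (ex_intro _ v (conj Hv erefl))).
pose u := v - c *m V.
have Hu : M u by apply: MD => //; rewrite -scaleN1r; apply: MZ; apply: submod_mulmx.
have Eu : u = row_mx 0 (rsubmx u).
  rewrite -{1}(hsubmxK u); congr row_mx; apply/matrixP => i j.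
  rewrite !mxE (ord1 i) (ord1 j) Hc /=; apply/eqP; rewrite subr_eq0; apply/eqP/eq_bigr => l _.
  by rewrite !mxE (proj2 (Hf l)).
have [w Hw] := HW2 (rsubmx u) ltac:(by rewrite /tail_submod -Eu).
exists (row_mx c w); rewrite mul_row_col mul_mx_row mulmx0 -Hw -Eu /u.
by rewrite addrC subrK.
Qed.

End Submodules.

Section FrobeniusSplitting.
Variables (Rg : comNzRingType) (p : nat).
Hypothesis pcharRp : p \in GRing.pchar Rg.
Local Open Scope ring_scope.
Local Notation frob := (pFrobenius_aut pcharRp).

Lemma Fpure_solvable m n (A : 'M[Rg]_(m, n)) (b : 'cV_m) : Fpure Rg p ->
  (exists y, map_mx frob A *m y = map_mx frob b) -> exists x, A *m x = b.
Proof.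
move=> [Hinj Hpure] /Hpure [x Hx]; exists x; apply/matrixP => i j; apply: Hinj.
change (map_mx frob A *m map_mx frob x = map_mx frob b) in Hx.
by move/matrixP: Hx => /(_ i j); rewrite -map_mxM !mxE.
Qed.

Section FrobeniusCombination.
Variables (k : nat) (s : 'cV[Rg]_k).

(* [frob_comb c] is the element [sum_j c_j s_j] of [F_* R]. *)
Definition frob_comb (c : 'rV[Rg]_k) : Rg := (map_mx frob c *m s) 0 0.

Lemma frob_combD c c' : frob_comb (c + c') = frob_comb c + frob_comb c'.
Proof. by rewrite /frob_comb map_mxD mulmxDl mxE. Qed.

Lemma frob_combB c c' : frob_comb (c - c') = frob_comb c - frob_comb c'.
Proof. by rewrite /frob_comb map_mxB mulmxBl !mxE. Qed.

Lemma frob_combZ r c : frob_comb (r *: c) = r ^+ p * frob_comb c.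
Proof. by rewrite /frob_comb map_mxZ -scalemxAl mxE. Qed.

Lemma submod_frob_comb_kernel : submod (fun c => frob_comb c = 0).
Proof.
split=> [|u v Hu Hv|r u Hu]; last by rewrite frob_combZ Hu mulr0.
  by rewrite /frob_comb map_mx0 mul0mx mxE.
by rewrite frob_combD Hu Hv addr0.
Qed.

(* The purity of Frobenius turns the solution [s] in [F_* R] of the system
   [G y = 0, c1 y = 1] (the rows of [G] generating the relations of [s]) into
   a solution in [R]. *)
Lemma frob_comb_section c1 : noetherian Rg -> Fpure Rg p -> frob_comb c1 = 1 ->
  exists x : 'cV_k, c1 *m x = 1 /\ forall c, frob_comb c = 0 -> c *m x = 0.
Proof.
move=> HN Hpure Hc1.
have [m [G [HG HGspan]]] := noetherian_submod_fg HN submod_frob_comb_kernel.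
have [x Hx] : exists x, col_mx G c1 *m x = col_mx 0 1.
  apply: Fpure_solvable Hpure _; exists s.
  rewrite !map_col_mx map_mx0 map_mx1 mul_col_mx; congr col_mx.
    apply/row_matrixP => i; rewrite row0 row_mul -map_row.
    by apply/rowP => j; rewrite (ord1 j) [RHS]mxE -(HG i).
  by apply/rowP => j; rewrite (ord1 j) [RHS]mxE -Hc1.
exists x; split; first by have := congr1 dsubmx Hx; rewrite mul_col_mx !col_mxKd.
move=> c /HGspan [w ->]; rewrite -mulmxA.
by have := congr1 usubmx Hx; rewrite mul_col_mx !col_mxKu => ->; rewrite mulmx0.
Qed.

End FrobeniusCombination.

Lemma Fpure_Fsplitting : noetherian Rg -> Ffinite Rg p -> Fpure Rg p ->
  exists sigma : Rg -> Rg, Fsplitting p sigma.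
Proof.
move=> HN [sl Hsl] Hpure; pose s := \col_(j < size sl) sl`_j.
have onto z : exists c, frob_comb s c == z.
  have [c [_ ->]] := Hsl z; exists (\row_j c`_j).
  by rewrite /frob_comb mxE; apply/eqP/eq_bigr => j _; rewrite !mxE.
pose cf z := xchoose (onto z).
have cfK z : frob_comb s (cf z) = z := eqP (xchooseP (onto z)).
have [x [Hx1 Hx0]] := frob_comb_section HN Hpure (cfK 1).
have cf_wd c z : frob_comb s c = z -> c *m x = cf z *m x.
  by move=> Hc; apply/eqP; rewrite -subr_eq0 -mulmxBl Hx0 // frob_combB Hc cfK subrr.
exists (fun z => (cf z *m x) 0 0); split; first split.
- by move=> u v; rewrite -(cf_wd (cf u + cf v)) ?mulmxDl ?mxE // frob_combD !cfK.
- by move=> r u; rewrite expn1 -(cf_wd (r *: cf u)) ?frob_combZ ?cfK // -scalemxAl mxE.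
- by rewrite Hx1 mxE.
Qed.

End FrobeniusSplitting.

Lemma bigcap_ideal (Rg : comNzRingType) (I : Type) (q : I -> Rg -> Prop) :
  (forall i, ideal (q i)) -> ideal (bigcap q).
Proof.
move=> Hq; split=> [i|x y Hx Hy i|r x Hx i]; have [I0 ID IM] := Hq i.
- exact: I0.
- exact: ID.
- exact: IM.
Qed.

Lemma nat_pred_max (P : nat -> Prop) B : (exists t, P t) ->
  (forall t, P t -> (t <= B)%nat) -> exists m, P m /\ forall t, P t -> (t <= m)%nat.
Proof.
elim: B => [|B IH] Hex Hb.
  by have [t Ht] := Hex; exists t; split=> // t' /Hb; have := Hb t Ht; lia.
have [HB|HB] := classic (P B.+1); first by exists B.+1.
apply: IH => // t Ht; have := Hb t Ht; rewrite leq_eqVlt => /orP [/eqP Et|//].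
by rewrite Et in Ht.
Qed.

Section Threshold.
Variables (Rg : comNzRingType) (p : nat).
Local Open Scope ring_scope.
Implicit Types (J K a : Rg -> Prop).

Definition pow_not_sub_Je e J a t := ~ incl (ideal_pow a t) (Je p e J).

Definition pow_not_sub_Je_bounded e J a B := forall t, pow_not_sub_Je e J a t -> (t <= B)%nat.

Lemma bnumP e J a B : pow_not_sub_Je_bounded e J a B ->
  (pow_not_sub_Je e J a (bnum p e J a) /\
     forall t, pow_not_sub_Je e J a t -> (t <= bnum p e J a)%nat) \/
  ((forall t, ~ pow_not_sub_Je e J a t) /\ bnum p e J a = 0%nat).
Proof.
move=> HB; rewrite /bnum; set P := fun t => _ \/ _.
have := @epsilon_spec nat (inhabits 0%nat) P.
have [[t Ht]|Hnone] := classic (exists t, pow_not_sub_Je e J a t).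
  have [m Hm] := nat_pred_max (ex_intro _ t Ht) HB.
  by case=> [|[]|[Hno _]]; [exists m; left | left | case: Hno; exists m].
case=> [|[]|[_ ->]]; first by exists 0%nat; right; split=> // -[m [Hm _]]; apply: Hnone; exists m.
  by move=> Hm _; case: Hnone; eexists; exact: Hm.
by right; split=> // t Ht; apply: Hnone; exists t.
Qed.

Lemma bnum_le e J K a B : pow_not_sub_Je_bounded e K a B ->
  (forall t, pow_not_sub_Je e J a t -> pow_not_sub_Je e K a t) ->
  (bnum p e J a <= bnum p e K a)%nat.
Proof.
move=> HB HJK; have HBJ : pow_not_sub_Je_bounded e J a B by move=> t /HJK /HB.
case: (bnumP HBJ) => [[/HJK HJ _]|[_ ->]] //.
by case: (bnumP HB) => [[_ /(_ _ HJ)]|[/(_ _ HJ)]].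
Qed.

Lemma pow_not_sub_Je_bigcap e (I : Type) (q : I -> Rg -> Prop) a t :
  pow_not_sub_Je e (bigcap q) a t <-> exists i, pow_not_sub_Je e (q i) a t.
Proof.
split=> [Ht|[i Hi] Hsub]; last by apply: Hi => x /Hsub /Je_bigcap.
apply: NNPP => Hno; apply: Ht => x Hx; apply/Je_bigcap => i.
by apply: NNPP => Hxi; apply: Hno; exists i => /(_ x Hx).
Qed.

Lemma bnum_bigcap_le e (I : Type) (q : I -> Rg -> Prop) a B : inhabited I ->
  (forall i, pow_not_sub_Je_bounded e (q i) a B) ->
  exists i, (bnum p e (bigcap q) a <= bnum p e (q i) a)%nat.
Proof.
move=> [i0] HB; have HBJ : pow_not_sub_Je_bounded e (bigcap q) a B.
  by move=> t /pow_not_sub_Je_bigcap [i /HB].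
case: (bnumP HBJ) => [[/pow_not_sub_Je_bigcap [i Hi] _]|[_ ->]]; last by exists i0.
by exists i; case: (bnumP (HB i)) => [[_ /(_ _ Hi)]|[/(_ _ Hi)]].
Qed.

Lemma pow_not_sub_Je_frobenius (sigma : Rg -> Rg) e J a t : Fsplitting p sigma ->
  pow_not_sub_Je e J a t -> pow_not_sub_Je e.+1 J a (t * p).
Proof.
move=> Hsigma Ht Hsub; apply: Ht => f Hf.
by apply: (Je_frobenius_root Hsigma); apply: Hsub; apply: ideal_powX.
Qed.

Lemma bnum_frobenius (sigma : Rg -> Rg) e J a B B' : Fsplitting p sigma ->
  pow_not_sub_Je_bounded e J a B -> pow_not_sub_Je_bounded e.+1 J a B' ->
  (p * bnum p e J a <= bnum p e.+1 J a)%nat.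
Proof.
move=> Hsigma HB HB'; case: (bnumP HB) => [[/(pow_not_sub_Je_frobenius Hsigma) Ht _]|[_ ->]].
  by case: (bnumP HB') => [[_ /(_ _ Ht)]|[/(_ _ Ht)]] //; rewrite mulnC.
by rewrite muln0.
Qed.

End Threshold.

Section RatioLimit.
Local Open Scope R_scope.

Lemma ratio_le (m n q : nat) : (0 < q)%nat -> (m <= n)%nat -> INR m / INR q <= INR n / INR q.
Proof.
move=> q_gt0 /leP Hmn; apply/Rmult_le_compat_r/le_INR => //.
by apply/Rlt_le/Rinv_0_lt_compat/lt_0_INR/ltP.
Qed.

Lemma ratio_growing_ub (b : nat -> nat) (p C : nat) : (0 < p)%nat ->
  (forall e, p * b e <= b e.+1)%nat -> (forall e, b e <= C * expn p e)%nat ->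
  Un_growing (fun e => INR (b e) / INR (expn p e)) /\
  has_ub (fun e => INR (b e) / INR (expn p e)).
Proof.
move=> p_gt0 Hb Hub; have pe_gt0 e : (0 < expn p e)%nat by rewrite expn_gt0 p_gt0.
have INR_pe e : INR (expn p e) <> 0 by apply/not_0_INR/eqP; rewrite -lt0n.
split=> [e|]; last first.
  exists (INR C) => _ [e ->]; apply: Rle_trans (ratio_le (pe_gt0 e) (Hub e)) _.
  by rewrite mult_INR Rmult_div_l //; apply: Rle_refl.
apply: Rle_trans (ratio_le (pe_gt0 e.+1) (Hb e)).
have INR_p : INR p <> 0 by apply/not_0_INR/eqP; rewrite -lt0n.
by rewrite expnS !mult_INR Rdiv_mult_l_l //; apply: Rle_refl.
Qed.

Lemma Un_cv_le_ub (u : nat -> R) l M : Un_cv u l -> (forall n, u n <= M) -> l <= M.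
Proof.
move=> Hu HM; apply: (Rle_cv_lim HM Hu) => eps eps_gt0.
by exists 0%nat => n _; rewrite R_dist_eq.
Qed.

End RatioLimit.

Definition bnum_ratio (Rg : comNzRingType) (p : nat) (J a : Rg -> Prop) (e : nat) : R :=
  (INR (bnum p e J a) / INR (expn p e))%R.

Lemma ct_spec (Rg : comNzRingType) (p C : nat) (J a : Rg -> Prop) (sigma : Rg -> Rg) :
  prime p -> Fsplitting p sigma ->
  (forall e, pow_not_sub_Je_bounded p e J a (C * expn p e)) ->
  Un_cv (bnum_ratio p J a) (ct p J a) /\ forall e, (bnum_ratio p J a e <= ct p J a)%R.
Proof.
move=> Hpr Hsigma HB.
have bnd e : (bnum p e J a <= C * expn p e)%nat by case: (bnumP (HB e)) => [[/HB]|[_ ->]].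
have [Hgrow Hub] := ratio_growing_ub (prime_gt0 Hpr)
  (fun e => bnum_frobenius Hsigma (HB e) (HB e.+1)) bnd.
have [l Hl] := growing_cv _ Hgrow Hub.
have Hct : Un_cv (bnum_ratio p J a) (ct p J a).
  exact: epsilon_spec (inhabits 0%R) _ (ex_intro _ l Hl).
by split=> // e; apply: growing_ineq Hgrow Hct e.
Qed.

Theorem mainTheorem13 (Rg : comNzRingType) (p : nat) (I : Type)
  (q : I -> Rg -> Prop) (a : Rg -> Prop) :
  prime p -> p \in GRing.pchar Rg ->
  noetherian Rg -> Ffinite Rg p -> Fpure Rg p ->
  inhabited I ->
  (forall i, ideal (q i)) -> ideal a ->
  incl a (radical (bigcap q)) ->
  is_lub (fun x => exists i, x = ct p (q i) a) (ct p (bigcap q) a).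
Proof.
move=> Hpr Hp HN HF HP HI Hq Ha Hrad.
have [sigma Hsigma] := Fpure_Fsplitting Hp HN HF HP.
have [C HC] := ideal_pow_sub_Je_linear p HN (bigcap_ideal Hq) Ha Hrad.
have BJ e : pow_not_sub_Je_bounded p e (bigcap q) a (C * expn p e).
  by move=> t Ht; rewrite leqNgt; apply/negP => /HC.
have Bq i e : pow_not_sub_Je_bounded p e (q i) a (C * expn p e).
  by move=> t Ht; apply: BJ; apply/pow_not_sub_Je_bigcap; exists i.
have pe_gt0 e : (0 < expn p e)%nat by rewrite expn_gt0 prime_gt0.
have [cvJ _] := ct_spec Hpr Hsigma BJ.
split=> [_ [i ->]|M HM].
  have [cvi _] := ct_spec Hpr Hsigma (Bq i).
  apply: Rle_cv_lim cvi cvJ => e; apply/ratio_le/(bnum_le (BJ e)) => // t Ht.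
  by apply/pow_not_sub_Je_bigcap; exists i.
apply: (Un_cv_le_ub cvJ) => e.
have [i Hi] := bnum_bigcap_le HI (fun i => Bq i e).
have [_ le_cti] := ct_spec Hpr Hsigma (Bq i).
apply: Rle_trans (HM _ (ex_intro _ i erefl)).
exact: Rle_trans (ratio_le (pe_gt0 e) Hi) (le_cti e).
Qed.
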